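(* Let $\Sigma$ be an alphabet, $n\ge1$, and let $p(x)\in\mathrm{GF}(2)[x]$ be an irreducible polynomial of degree $L\ge n$. Let $h_1:\Sigma\to\mathrm{GF}(2)[x]/p(x)$ be a random function whose values $h_1(c)$, $c\in\Sigma$, are mutually independent and uniformly distributed on the field $\mathrm{GF}(2)[x]/p(x)$ (which has $2^L$ elements). Define $h(a_1,\dots,a_n)=h_1(a_1)x^{n-1}+h_1(a_2)x^{n-2}+\cdots+h_1(a_n)$ computed in $\mathrm{GF}(2)[x]/p(x)$. Then $h$ is pairwise independent: for all distinct $a,a'\in\Sigma^n$ and all $y,y'\in\mathrm{GF}(2)[x]/p(x)$, $P(h(a)=y\wedge h(a')=y')=4^{-L}$.
   Context: This hash family is called General. Elements of $\mathrm{GF}(2)[x]/p(x)$ are identified with polynomials of degree at most $L-1$ over $\mathrm{GF}(2)$, equivalently with $L$-bit integers. *)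

From HB Require Import structures.
From mathcomp Require Import all_boot all_order all_algebra all_field.
Set Implicit Arguments. Unset Strict Implicit. Unset Printing Implicit Defensive.
Import GRing.Theory.
Local Open Scope ring_scope.

Definition general_hash (Sigma : finType) (p : {poly 'F_2}) (n : nat)
  (h1 : {ffun Sigma -> {poly %/ p}}) (a : n.-tuple Sigma) : {poly %/ p} :=
  \sum_(i < n) h1 (tnth a i) * 'qX ^+ (n.-1 - i).

Definition prob_h1 (Sigma : finType) (p : {poly 'F_2})
  (E : pred {ffun Sigma -> {poly %/ p}}) : rat :=
  (#|[set h1 | E h1]|)%:R / (#|{ffun Sigma -> {poly %/ p}}|)%:R.

From HB Require Import structures.
From mathcomp Require Import all_boot all_order all_algebra all_field.
From mathcomp Require Import ring.
Import GRing.Theory Num.Theory.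
Local Open Scope ring_scope.
Set Implicit Arguments. Unset Strict Implicit. Unset Printing Implicit Defensive.

(* Write K = GF(2)[x]/p(x), a field with 2^L elements.  The map
     f : h1 |-> (h(a), h(a'))  from  K^Sigma  to  K * K
   is additive, so all its fibres have the same size as soon as it is onto,
   and then every pair (y, y') has probability #|K|^-2 = 4^-L.
   Surjectivity is linear algebra over K: h(a) = sum_c h1(c) * u(c) where
   u(c) = sum_{i | a_i = c} x^(n-1-i), and similarly h(a') with v.  Because
   deg x^(n-1) < L, the polynomials sum_{i in P} x^(n-1-i) are pairwise
   distinct in K for distinct index sets P, hence
     sum_c u(c) = sum_c v(c) != 0   and   u(c) != v(c) at c = a_j, a_j <> a'_j,
   which forces a nonzero 2x2 minor u(c)v(d) - u(d)v(c); Cramer's rule on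
   the coordinates c, d then solves h(a) = y, h(a') = y'. *)

(* Functions and pairs carry separate finite and additive-group structures;
   this declares the combined finite-zmodule structures on them. *)
HB.saturate finfun_of.
HB.saturate prod.

(* A surjective additive map between finite abelian groups has all fibres of
   size #|G| / #|H|: each fibre is a translate of any other. *)
Lemma card_fiber_additive (G H : finZmodType) (f : G -> H) :
  {morph f : x y / x + y} -> (forall z, exists x, f x = z) ->
  forall z, (#|[set x | f x == z]| * #|H|)%N = #|G|.
Proof.
move=> f_add f_onto.
have fiber_le z z' : (#|[set x | f x == z]| <= #|[set x | f x == z']|)%N.
  have [d fd] := f_onto (z' - z).
  rewrite -(card_imset _ (addIr d)); apply: subset_leq_card.
  apply/subsetP => w /imsetP [x]; rewrite inE => /eqP fx ->.
  by rewrite inE f_add fx fd addrC subrK.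
move=> z.
have fiber_eq z' : #|[set x | f x == z']| = #|[set x | f x == z]|.
  by apply/eqP; rewrite eqn_leq !fiber_le.
have -> : #|G| = (\sum_(x : G) 1)%N by rewrite sum1_card.
rewrite (partition_big f predT) //=.
transitivity (\sum_(j : H) #|[set x | f x == j]|)%N.
  rewrite (eq_bigr _ (fun j _ => fiber_eq j)) sum_nat_const.
  by rewrite cardT -cardE mulnC.
by apply: eq_bigr => j _; rewrite -sum1_card; apply: eq_bigl => x; rewrite inE.
Qed.

Lemma sum_indicator (V : nmodType) (I : finType) (x : I -> V) (c : I) :
  \sum_e x e *+ (e == c) = x c.
Proof.
by under eq_bigr => e _ do rewrite mulrb; rewrite -big_mkcond big_pred1_eq.
Qed.

Section TwoLinearForms.
Variables (F : fieldType) (Sigma : finType) (u v : Sigma -> F).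

(* Two linear forms h |-> sum_e h(e) u(e), h |-> sum_e h(e) v(e) on F^Sigma
   with a nonzero 2x2 minor are jointly onto F * F (Cramer's rule on the
   coordinates c and d). *)
Lemma linear_forms_onto c d : u c * v d - u d * v c != 0 ->
  forall y y', exists h : {ffun Sigma -> F},
    \sum_e h e * u e = y /\ \sum_e h e * v e = y'.
Proof.
move=> minor_neq0 y y'; pose D := u c * v d - u d * v c.
pose alpha := (y * v d - y' * u d) / D; pose beta := (y' * u c - y * v c) / D.
pose h := [ffun e => alpha *+ (e == c) + beta *+ (e == d)].
have h_form (w : Sigma -> F) :
    \sum_e h e * w e = alpha * w c + beta * w d.
  under eq_bigr => e _ do rewrite ffunE mulrDl !mulrnAl.
  by rewrite big_split /= !sum_indicator.
exists h; rewrite !h_form /alpha /beta /D; split; field; exact: minor_neq0.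
Qed.

(* If u and v have the same nonzero sum but differ at c, then some minor
   u(c)v(d) - u(d)v(c) is nonzero: otherwise summing over d would give
   u(c) S = v(c) S with S the common sum. *)
Lemma nonzero_minor c :
  \sum_e u e = \sum_e v e -> \sum_e u e != 0 -> u c != v c ->
  exists d, u c * v d - u d * v c != 0.
Proof.
move=> sum_uv sum_neq0 uv_c.
apply/existsP; apply: contraT; rewrite negb_exists => /forallP minors0.
have : \sum_d (u c * v d - u d * v c) = 0.
  by apply: big1 => d _; apply/eqP; rewrite -[_ == 0]negbK minors0.
rewrite sumrB -mulr_sumr -mulr_suml -sum_uv mulrC -mulrBr => /eqP.
by rewrite mulf_eq0 subr_eq0 (negbTE sum_neq0) (negbTE uv_c).
Qed.

End TwoLinearForms.

Section DigitPoly.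
Variables (R : nzRingType) (n : nat).

(* The polynomial sum_{i in P} X^(n-1-i) whose top-down binary digits are the
   indicator of the index set P. *)
Definition digit_poly (P : pred 'I_n) : {poly R} :=
  \sum_(i < n | P i) 'X^(n.-1 - i).

Lemma size_digit_poly P : (size (digit_poly P) <= n)%N.
Proof.
apply/leq_sizeP => k n_le_k; rewrite coef_sum big1 // => i _.
rewrite coefXn gtn_eqF // (leq_ltn_trans (leq_subr _ _)) //.
rewrite (leq_trans _ n_le_k) //.
by rewrite ltn_predL (leq_ltn_trans _ (ltn_ord i)).
Qed.

Lemma coef_digit_poly P (j : 'I_n) : (digit_poly P)`_(n.-1 - j) = (P j)%:R.
Proof.
have le_pred (i : 'I_n) : (i <= n.-1)%N.
  by rewrite -ltnS prednK // (leq_ltn_trans _ (ltn_ord i)).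
rewrite coef_sum (eq_bigr (fun i => (i == j)%:R)) => [|i _]; last first.
  by rewrite coefXn eqn_sub2lE // eq_sym.
rewrite big_mkcond -(sum_indicator (fun i => (P i)%:R) j) /=.
by apply: eq_bigr => i _; case: (P i); rewrite ?mul0rn.
Qed.

(* Modulo a monic p of degree >= n, digit polynomials are already reduced,
   so their classes determine the digits. *)
Lemma in_qpoly_digit_poly_inj (p : {poly R}) (P Q : pred 'I_n) :
  p \is monic -> (n < size p)%N ->
  in_qpoly p (digit_poly P) = in_qpoly p (digit_poly Q) -> P =1 Q.
Proof.
move=> p_monic n_lt_p PQ j.
have p_reduced : mk_monic p = p.
  have n_gt0 : (0 < n)%N := leq_ltn_trans (leq0n j) (ltn_ord j).
  by rewrite /mk_monic p_monic andbT (leq_ltn_trans n_gt0 n_lt_p).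
have small P' : (size (digit_poly P') < size (mk_monic p))%N.
  by rewrite p_reduced (leq_ltn_trans (size_digit_poly _)).
move: (congr1 (@polyn _ _) PQ); rewrite !in_qpoly_small //.
move=> /(congr1 (fun q : {poly R} => q`_(n.-1 - j))); rewrite !coef_digit_poly.
by case: (P j) (Q j) => [] [] // /eqP; rewrite ?oner_eq0 // eq_sym oner_eq0.
Qed.

End DigitPoly.

Lemma F2_poly_monic (q : {poly 'F_2}) : q != 0 -> q \is monic.
Proof.
by rewrite monicE -lead_coef_eq0; case: (lead_coef q) => [[|[|k]] lt_k].
Qed.

Section GeneralHash.
Variables (Sigma : finType) (p : {poly 'F_2}) (n : nat).

Definition hash_coef (a : n.-tuple Sigma) (c : Sigma) : {poly %/ p} :=
  \sum_(i < n | tnth a i == c) 'qX ^+ (n.-1 - i).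

Lemma general_hashE (h1 : {ffun Sigma -> {poly %/ p}}) (a : n.-tuple Sigma) :
  general_hash h1 a = \sum_c h1 c * hash_coef a c.
Proof.
rewrite /general_hash (partition_big (tnth a) predT) //=; apply: eq_bigr => c _.
by rewrite mulr_sumr; apply: eq_bigr => i /eqP ->.
Qed.

Lemma general_hashD (h1 h2 : {ffun Sigma -> {poly %/ p}}) (a : n.-tuple Sigma) :
  general_hash (h1 + h2) a = general_hash h1 a + general_hash h2 a.
Proof.
by rewrite /general_hash -big_split; apply: eq_bigr => i _; rewrite ffunE mulrDl.
Qed.

Lemma in_qpoly_digit_poly (P : pred 'I_n) :
  in_qpoly p (digit_poly _ P) = \sum_(i < n | P i) 'qX ^+ (n.-1 - i).
Proof. by rewrite linear_sum; apply: eq_bigr => i _; rewrite rmorphXn. Qed.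

Lemma hash_coefE (a : n.-tuple Sigma) c :
  hash_coef a c = in_qpoly p (digit_poly _ [pred i | tnth a i == c]).
Proof. by rewrite in_qpoly_digit_poly. Qed.

Lemma sum_hash_coef (a : n.-tuple Sigma) :
  \sum_c hash_coef a c = in_qpoly p (digit_poly _ (@predT 'I_n)).
Proof. by rewrite in_qpoly_digit_poly (partition_big (tnth a) predT). Qed.

Lemma general_hash_pair_onto (p_mirr : monic_irreducible_poly p) :
  (n < size p)%N -> forall a a' : n.-tuple Sigma, a != a' ->
  forall y y' : {poly %/ p},
  exists h1, general_hash h1 a = y /\ general_hash h1 a' = y'.
Proof.
move=> n_lt_p a a' a_neq y y'; pose K := {poly %/ p with p_mirr}.
have digits_inj P Q := @in_qpoly_digit_poly_inj _ _ p P Q p_mirr.2 n_lt_p.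
have [j aj_neq] : exists j, tnth a j != tnth a' j.
  case: (pickP (fun j => tnth a j != tnth a' j)) => [j aj_neq | same].
    by exists j.
  by case/eqP: a_neq; apply: eq_from_tnth => i; apply/eqP/negbFE/same.
have coef_neq : hash_coef a (tnth a j) != hash_coef a' (tnth a j).
  rewrite !hash_coefE; apply/eqP => /digits_inj/(_ j) /=.
  by rewrite eqxx eq_sym (negbTE aj_neq).
have sum_eq : \sum_c hash_coef a c = \sum_c hash_coef a' c.
  by rewrite !sum_hash_coef.
have sum_neq0 : \sum_c hash_coef a c != 0.
  rewrite sum_hash_coef; apply/eqP => digits0.
  suff: predT j = pred0 j by [].
  by apply: digits_inj; rewrite digits0 /digit_poly big_pred0 // in_qpoly0.
have [d minor_neq0] := nonzero_minor (F := K) sum_eq sum_neq0 coef_neq.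
have [h1 [hy hy']] := linear_forms_onto minor_neq0 y y'.
by exists h1; rewrite !general_hashE.
Qed.

End GeneralHash.

Theorem mainTheorem4 (Sigma : finType) (n L : nat) (p : {poly 'F_2}) :
  (1 <= n)%N -> irreducible_poly p -> size p = L.+1 -> (n <= L)%N ->
  forall (a a' : n.-tuple Sigma) (y y' : {poly %/ p}),
    a != a' ->
    prob_h1 (fun h1 => (general_hash h1 a == y) && (general_hash h1 a' == y'))
    = (4 ^ L)%:R^-1.
Proof.
move=> n_gt0 p_irr size_p n_le_L a a' y y' a_neq.
have p_monic : p \is monic by rewrite F2_poly_monic // -size_poly_gt0 size_p.
have n_lt_p : (n < size p)%N by rewrite size_p.
pose f (h1 : {ffun Sigma -> {poly %/ p}}) :=
  (general_hash h1 a, general_hash h1 a').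
have f_add : {morph f : h1 h2 / h1 + h2}.
  by move=> h1 h2; rewrite /f !general_hashD.
have f_onto z : exists h1, f h1 = z.
  case: z => z z'.
  have [h1 [hz hz']] := general_hash_pair_onto (p_irr, p_monic) n_lt_p a_neq z z'.
  by exists h1; rewrite /f hz hz'.
have card_K : #|{poly %/ p}| = (2 ^ L)%N.
  by rewrite card_monic_qpoly ?card_Fp ?size_p // ltnS (leq_trans n_gt0).
have fiber_neq0 : #|[set h1 | f h1 == (y, y')]| != 0%N.
  have [h1 fh1] := f_onto (y, y').
  by rewrite -lt0n; apply/card_gt0P; exists h1; rewrite inE fh1.
rewrite /prob_h1.
have -> : [set h1 | (general_hash h1 a == y) && (general_hash h1 a' == y')]
        = [set h1 | f h1 == (y, y')] by apply/setP => h1; rewrite !inE.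
rewrite -(card_fiber_additive f_add f_onto (y, y')) card_prod card_K.
by rewrite -expnMn natrM invfM mulrA divff ?mul1r // pnatr_eq0.
Qed.
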